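(* Let $X$ be a set with exactly four elements and let $B_X$ be the monoid of binary relations on $X$. For every field $k$, the monoid algebra $kB_X$ is of infinite representation type.
   Context: The monoid of binary relations $B_X$ on a set $X$ consists of all subsets of $X\times X$, with multiplication given by composition of relations: $(R S) = \{(x,z): \exists y\in X,\ (x,y)\in R,\ (y,z)\in S\}$; the identity is the diagonal relation. A finite-dimensional $k$-algebra is of infinite representation type if it has infinitely many isomorphism classes of finite-dimensional indecomposable modules. *)

From HB Require Import structures.
From mathcomp Require Import all_boot all_order all_algebra.
Set Implicit Arguments. Unset Strict Implicit. Unset Printing Implicit Defensive.
Import GRing.Theory.
Local Open Scope ring_scope.

Definition rel_on (X : finType) := {set X * X}.

Definition rel_comp (X : finType) (R S : rel_on X) : rel_on X :=
  [set p | [exists y, ((p.1, y) \in R) && ((y, p.2) \in S)]].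

Definition rel_diag (X : finType) : rel_on X := [set p | p.1 == p.2].

(* A finite-dimensional (left) module over the monoid algebra k B_X is the
   same as a unital monoid action of B_X on k^n by linear maps.
   Convention: vectors are row vectors, R acts by v |-> v *m rho R, so a
   left action requires rho (R S) = rho S *m rho R. *)
Definition is_BX_rep (k : fieldType) (X : finType) (n : nat)
  (rho : rel_on X -> 'M[k]_n) : Prop :=
  rho (rel_diag X) = 1%:M /\
  forall R S : rel_on X, rho (rel_comp R S) = rho S *m rho R.

Record BXmod (k : fieldType) (X : finType) := BXMod {
  mdim : nat;
  mact : rel_on X -> 'M[k]_mdim;
  mact_rep : is_BX_rep mact }.

Definition mod_iso (k : fieldType) (X : finType) (M N : BXmod k X) : Prop :=
  exists (P : 'M[k]_(mdim M, mdim N)) (Q : 'M[k]_(mdim N, mdim M)),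
    [/\ P *m Q = 1%:M, Q *m P = 1%:M &
        forall R : rel_on X, mact M R *m P = P *m mact N R].

Definition indecomposable (k : fieldType) (X : finType) (M : BXmod k X) : Prop :=
  (0 < mdim M)%N /\
  ~ exists U W : 'M[k]_(mdim M),
      [/\ U != 0, W != 0,
          forall R : rel_on X, stablemx U (mact M R),
          forall R : rel_on X, stablemx W (mact M R) &
          (U :&: W == (0 : 'M[k]_(mdim M)))%MS && (U + W == 1%:M)%MS].

Definition infinite_rep_type (k : fieldType) (X : finType) : Prop :=
  ~ exists (N : nat) (F : 'I_N -> BXmod k X),
      forall M : BXmod k X, indecomposable M -> exists i : 'I_N, mod_iso M (F i).

(* Call a relation p prime if every factorization p = a b has an invertible
   factor (a permutation).  On a four-element set there are two non-invertible
   prime relations p1, p2 that are not associate (p2 <> u p1 v for permutations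
   u, v), and the identity is prime as well.  Then for any matrices A, B with
   A^2 = AB = BA = B^2 = 0, letting permutations act trivially, associates of p1
   act by A, associates of p2 by B and all other relations by 0 defines a
   representation of B_X: a product of two non-invertible relations is neither
   invertible nor an associate of a prime.  Taking for A, B the two arrows of
   the indecomposable Kronecker module of dimension vector (n + 1, n + 2), whose
   only idempotent endomorphisms are 0 and 1, yields indecomposable modules of
   unbounded dimension.  Primality is checked by evaluation over all 2^16
   relations on a four-element set. *)

From mathcomp Require Import all_boot all_order all_algebra zify.
Set Implicit Arguments. Unset Strict Implicit. Unset Printing Implicit Defensive.
Import GRing.Theory.

Section Relations.

Variable X : finType.
Implicit Types (R S T a b p u v : rel_on X).

Definition rel_conv R : rel_on X := [set q | (q.2, q.1) \in R].

Lemma in_rel_comp R S x z :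
  ((x, z) \in rel_comp R S) = [exists y, ((x, y) \in R) && ((y, z) \in S)].
Proof. by rewrite inE. Qed.

Lemma in_rel_diag x z : ((x, z) \in rel_diag X) = (x == z).
Proof. by rewrite inE. Qed.

Lemma in_rel_conv R x z : ((x, z) \in rel_conv R) = ((z, x) \in R).
Proof. by rewrite inE. Qed.

Lemma rel_compA R S T : rel_comp (rel_comp R S) T = rel_comp R (rel_comp S T).
Proof.
apply/setP => -[x z]; rewrite !in_rel_comp; apply/existsP/existsP.
- case=> y /andP[]; rewrite in_rel_comp => /existsP[w /andP[xw wy] yz].
  by exists w; rewrite xw in_rel_comp; apply/existsP; exists y; rewrite wy yz.
- case=> y /andP[xy]; rewrite in_rel_comp => /existsP[w /andP[yw wz]].
  by exists w; rewrite wz andbT in_rel_comp; apply/existsP; exists y; rewrite xy yw.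
Qed.

Lemma rel_comp1l R : rel_comp (rel_diag X) R = R.
Proof.
apply/setP => -[x z]; rewrite in_rel_comp; apply/existsP/idP.
- by case=> y /andP[]; rewrite in_rel_diag => /eqP ->.
- by exists x; rewrite in_rel_diag eqxx.
Qed.

Lemma rel_comp1r R : rel_comp R (rel_diag X) = R.
Proof.
apply/setP => -[x z]; rewrite in_rel_comp; apply/existsP/idP.
- by case=> y /andP[xy]; rewrite in_rel_diag => /eqP <-.
- by exists z; rewrite in_rel_diag eqxx andbT.
Qed.

Lemma rel_convK : involutive rel_conv.
Proof. by move=> R; apply/setP => -[x z]; rewrite !in_rel_conv. Qed.

Lemma rel_conv_comp R S : rel_conv (rel_comp R S) = rel_comp (rel_conv S) (rel_conv R).
Proof.
apply/setP => -[x z]; rewrite in_rel_conv !in_rel_comp.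
by apply: eq_existsb => y; rewrite !in_rel_conv andbC.
Qed.

Lemma rel_conv_diag : rel_conv (rel_diag X) = rel_diag X.
Proof. by apply/setP => -[x z]; rewrite in_rel_conv !in_rel_diag eq_sym. Qed.

(* An invertible relation is a permutation, and its inverse is its converse. *)
Definition rel_invertible R : bool :=
  (rel_comp R (rel_conv R) == rel_diag X) && (rel_comp (rel_conv R) R == rel_diag X).

Lemma rel_invertible_conv R : rel_invertible (rel_conv R) = rel_invertible R.
Proof. by rewrite /rel_invertible rel_convK andbC. Qed.

Lemma rel_invertible_diag : rel_invertible (rel_diag X).
Proof. by rewrite /rel_invertible rel_conv_diag rel_comp1l eqxx. Qed.

Lemma rel_invertible_comp R S :
  rel_invertible R -> rel_invertible S -> rel_invertible (rel_comp R S).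
Proof.
move=> /andP[/eqP RR' /eqP R'R] /andP[/eqP SS' /eqP S'S].
rewrite /rel_invertible rel_conv_comp !rel_compA -(rel_compA S) SS' rel_comp1l RR' eqxx /=.
by rewrite -(rel_compA (rel_conv R)) R'R rel_comp1l S'S.
Qed.

Section Invertible.

Variables (u : rel_on X) (u_inv : rel_invertible u).

Lemma rel_compKl R : rel_comp (rel_conv u) (rel_comp u R) = R.
Proof. by case/andP: u_inv => _ /eqP uu; rewrite -rel_compA uu rel_comp1l. Qed.

Lemma rel_compKr R : rel_comp (rel_comp R u) (rel_conv u) = R.
Proof. by case/andP: u_inv => /eqP uu _; rewrite rel_compA uu rel_comp1r. Qed.

Lemma rel_invertible_compl R : rel_invertible (rel_comp u R) = rel_invertible R.
Proof.
apply/idP/idP => [uR|]; last exact: rel_invertible_comp.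
by rewrite -(rel_compKl R) rel_invertible_comp ?rel_invertible_conv.
Qed.

Lemma rel_invertible_compr R : rel_invertible (rel_comp R u) = rel_invertible R.
Proof.
apply/idP/idP => [Ru|]; last by move/rel_invertible_comp; apply.
by rewrite -(rel_compKr R) rel_invertible_comp ?rel_invertible_conv.
Qed.

Lemma rel_invertible_total x : exists y, (x, y) \in u.
Proof.
case/andP: u_inv => /eqP/setP/(_ (x, x)); rewrite in_rel_comp in_rel_diag eqxx.
by case/existsP=> y /andP[xy _]; exists y.
Qed.

Lemma rel_invertible_functional x y y' : (x, y) \in u -> (x, y') \in u -> y = y'.
Proof.
move=> xy xy'; apply/eqP; case/andP: u_inv => _ /eqP/setP/(_ (y, y')).
rewrite in_rel_comp in_rel_diag => <-.
by apply/existsP; exists x; rewrite in_rel_conv xy xy'.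
Qed.

End Invertible.

Definition prime_rel p : Prop :=
  forall a b, rel_comp a b = p -> rel_invertible a || rel_invertible b.

Definition rel_assoc p R : bool :=
  [exists u, exists v,
     [&& rel_invertible u, rel_invertible v & R == rel_comp u (rel_comp p v)]].

Lemma rel_assocP p R :
  reflect (exists u v,
             [/\ rel_invertible u, rel_invertible v & R = rel_comp u (rel_comp p v)])
          (rel_assoc p R).
Proof.
apply: (iffP existsP) => [[u /existsP[v /and3P[u_inv v_inv /eqP ->]]]|[u [v [u_inv v_inv ->]]]].
  by exists u, v.
by exists u; apply/existsP; exists v; rewrite u_inv v_inv eqxx.
Qed.

Lemma rel_assoc_refl p : rel_assoc p p.
Proof.
apply/rel_assocP; exists (rel_diag X), (rel_diag X).
by rewrite rel_invertible_diag rel_comp1l rel_comp1r.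
Qed.

Lemma rel_assoc_sym p R : rel_assoc p R -> rel_assoc R p.
Proof.
case/rel_assocP => u [v [u_inv v_inv ->]]; apply/rel_assocP.
exists (rel_conv u), (rel_conv v); rewrite !rel_invertible_conv.
by rewrite -rel_compA rel_compKl // rel_compKr.
Qed.

Lemma rel_assoc_compl p w R :
  rel_invertible w -> rel_assoc p (rel_comp w R) = rel_assoc p R.
Proof.
move=> w_inv; apply/rel_assocP/rel_assocP => -[u [v [u_inv v_inv e]]].
- exists (rel_comp (rel_conv w) u), v; rewrite rel_invertible_comp ?rel_invertible_conv //.
  by rewrite -(rel_compKl w_inv R) e rel_compA.
- by exists (rel_comp w u), v; rewrite rel_invertible_comp // e rel_compA.
Qed.

Lemma rel_assoc_compr p w R :
  rel_invertible w -> rel_assoc p (rel_comp R w) = rel_assoc p R.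
Proof.
move=> w_inv; apply/rel_assocP/rel_assocP => -[u [v [u_inv v_inv e]]].
- exists u, (rel_comp v (rel_conv w)); rewrite rel_invertible_comp ?rel_invertible_conv //.
  by rewrite -(rel_compKr w_inv R) e !rel_compA.
- by exists u, (rel_comp v w); rewrite rel_invertible_comp // e !rel_compA.
Qed.

Lemma rel_assoc1 R : rel_assoc (rel_diag X) R = rel_invertible R.
Proof.
apply/rel_assocP/idP => [[u [v [u_inv v_inv ->]]]|R_inv].
  by rewrite rel_comp1l rel_invertible_comp.
by exists R, (rel_diag X); rewrite R_inv rel_invertible_diag rel_comp1l rel_comp1r.
Qed.

Lemma prime_rel_assoc p R : prime_rel p -> rel_assoc p R -> prime_rel R.
Proof.
move=> pP /rel_assocP[u [v [u_inv v_inv ->]]] a b ab.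
have := pP (rel_comp (rel_conv u) a) (rel_comp b (rel_conv v)).
rewrite rel_compA -(rel_compA a) ab -(rel_compA u) rel_compKr // rel_compKl //.
by move/(_ erefl); rewrite rel_invertible_compl ?rel_invertible_compr ?rel_invertible_conv.
Qed.

Definition rel_rows_meet R : bool := rel_comp R (rel_conv R) == setT.

Lemma rel_rows_meet_assoc p R : rel_assoc p R -> rel_rows_meet p -> rel_rows_meet R.
Proof.
case/rel_assocP => u [v [u_inv v_inv ->]] /eqP pp.
rewrite /rel_rows_meet !rel_conv_comp !rel_compA -(rel_compA v).
case/andP: v_inv => /eqP -> _; rewrite rel_comp1l -(rel_compA p) pp.
rewrite eqEsubset subsetT; apply/subsetP => -[x z] _.
have [y xy] := rel_invertible_total u_inv x; have [w zw] := rel_invertible_total u_inv z.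
rewrite in_rel_comp; apply/existsP; exists y; rewrite xy /= in_rel_comp.
by apply/existsP; exists w; rewrite in_setT in_rel_conv.
Qed.

(* The largest relation [a] with [rel_comp a b \subset p]. *)
Definition rel_residual p b : rel_on X :=
  [set q | [forall z, ((q.2, z) \in b) ==> ((q.1, z) \in p)]].

Lemma prime_rel_residual p :
  (forall x, exists y, (x, y) \in p) ->
  (forall b, rel_comp (rel_residual p b) b = p ->
             rel_invertible b || rel_invertible (rel_residual p b)) ->
  prime_rel p.
Proof.
move=> p_total p_res a b ab; set A := rel_residual p b.
have aA x y : (x, y) \in a -> (x, y) \in A.
  move=> xy; rewrite inE; apply/forallP => z; apply/implyP => yz.
  by rewrite -ab in_rel_comp; apply/existsP; exists y; rewrite xy.
have Ab : rel_comp A b = p.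
  apply/setP => -[x z]; apply/idP/idP.
    by rewrite in_rel_comp => /existsP[y /andP[]]; rewrite inE => /forallP/(_ z)/implyP.
  rewrite -{1}ab !in_rel_comp => /existsP[y /andP[/aA xy yz]].
  by apply/existsP; exists y; rewrite xy.
case/orP: (p_res b Ab) => [->|A_inv]; first by rewrite orbT.
suff -> : a = A by rewrite A_inv.
apply/setP => -[x y]; apply/idP/idP => [/aA //|xy].
have [z] := p_total x; rewrite -ab in_rel_comp => /existsP[y' /andP[xy' _]].
by rewrite (rel_invertible_functional A_inv xy (aA _ _ xy')).
Qed.

End Relations.

Section Pullback.

Variables (X Y : finType).

Definition rel_pull (f : Y -> X) (R : rel_on X) : rel_on Y :=
  [set q | (f q.1, f q.2) \in R].

Lemma rel_pull_comp (f : Y -> X) (g : X -> Y) : cancel g f ->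
  {morph rel_pull f : R S / rel_comp R S}.
Proof.
move=> gK R S; apply/setP => -[y w]; rewrite inE /= !in_rel_comp.
apply/existsP/existsP => [[x]|[z]]; first by exists (g x); rewrite !inE /= gK.
by rewrite !inE /= => fyzw; exists (f z).
Qed.

Lemma rel_pull_diag (f : Y -> X) : injective f -> rel_pull f (rel_diag X) = rel_diag Y.
Proof. by move=> f_inj; apply/setP => -[y w]; rewrite !inE /= (inj_eq f_inj). Qed.

End Pullback.

Lemma rel_pullK (X Y : finType) (f : Y -> X) (g : X -> Y) :
  cancel g f -> cancel (rel_pull f) (rel_pull g).
Proof. by move=> gK R; apply/setP => -[x z]; rewrite !inE /= !gK. Qed.

Lemma mem_ord_iota n (i : 'I_n) : nat_of_ord i \in iota 0 n.
Proof. by rewrite mem_iota ltn_ord. Qed.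

Lemma has_iota_ord n (P : pred nat) : has P (iota 0 n) = [exists i : 'I_n, P i].
Proof.
rewrite -val_enum_ord has_map; apply/hasP/existsP => [[i _ Pi]|[i Pi]].
  by exists i.
by exists i; rewrite ?mem_enum.
Qed.

Lemma all_iota_ord n (P : pred nat) : all P (iota 0 n) = [forall i : 'I_n, P i].
Proof.
by apply/negb_inj; rewrite -has_predC has_iota_ord negb_forall.
Qed.

Fixpoint all_seqs (T : Type) (s : seq T) (n : nat) : seq (seq T) :=
  if n is n'.+1 then [seq x :: l | x <- s, l <- all_seqs s n'] else [:: [::]].

Lemma mem_all_seqs (T : eqType) (s l : seq T) n :
  size l = n -> all (mem s) l -> l \in all_seqs s n.
Proof.
elim: l n => [|x l IHl] [|n] //= [<-] /andP[xs ls].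
exact: (allpairs_f (fun x l => x :: l)) xs (IHl _ _ ls).
Qed.

(* Relations on ['I_4] as boolean matrices indexed by [nat], so that the
   primality test below can be evaluated by [vm_compute]: finset operations
   are locked and do not reduce. *)
Definition bmx := nat -> nat -> bool.

Local Notation I4 := (iota 0 4).

Definition rel_of_bmx (m : bmx) : rel_on 'I_4 := [set q : 'I_4 * 'I_4 | m q.1 q.2].
Definition bmx_of_seq (l : seq (seq bool)) : bmx := fun i j => nth false (nth [::] l i) j.
Definition bmx_table (m : bmx) : seq (seq bool) := [seq [seq m i j | j <- I4] | i <- I4].
Definition bmx_of_rel (R : rel_on 'I_4) : bmx := fun i j => (inord i, inord j) \in R.

Definition bmx_comp (a b : bmx) : bmx := fun i k => has (fun j => a i j && b j k) I4.
Definition bmx_conv (m : bmx) : bmx := fun i j => m j i.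
Definition bmx_diag : bmx := fun i j => i == j.
Definition bmx_top : bmx := fun _ _ => true.
Definition bmx_eq (a b : bmx) : bool := all (fun i => all (fun j => a i j == b i j) I4) I4.
Definition bmx_invertible (m : bmx) : bool :=
  bmx_eq (bmx_comp m (bmx_conv m)) bmx_diag && bmx_eq (bmx_comp (bmx_conv m) m) bmx_diag.
Definition bmx_residual (p b : bmx) : bmx := fun i y => all (fun z => b y z ==> p i z) I4.

Lemma rel_of_bmx_table m : rel_of_bmx (bmx_of_seq (bmx_table m)) = rel_of_bmx m.
Proof.
apply/setP => -[i j]; rewrite !inE /bmx_of_seq /=.
by rewrite !(nth_map 0) ?size_iota // !nth_iota.
Qed.

Lemma rel_of_bmx_of_rel R : rel_of_bmx (bmx_of_rel R) = R.
Proof. by apply/setP => -[i j]; rewrite inE /bmx_of_rel /= !inord_val. Qed.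

Lemma rel_of_bmx_comp a b :
  rel_of_bmx (bmx_comp a b) = rel_comp (rel_of_bmx a) (rel_of_bmx b).
Proof.
apply/setP => -[i k]; rewrite in_rel_comp inE /= /bmx_comp has_iota_ord.
by apply: eq_existsb => j; rewrite !inE.
Qed.

Lemma rel_of_bmx_conv m : rel_of_bmx (bmx_conv m) = rel_conv (rel_of_bmx m).
Proof. by apply/setP => -[i j]; rewrite in_rel_conv !inE. Qed.

Lemma rel_of_bmx_diag : rel_of_bmx bmx_diag = rel_diag 'I_4.
Proof. by apply/setP => -[i j]; rewrite !inE. Qed.

Lemma rel_of_bmx_top : rel_of_bmx bmx_top = setT.
Proof. by apply/setP => -[i j]; rewrite !inE. Qed.

Lemma rel_of_bmx_residual p b :
  rel_of_bmx (bmx_residual p b) = rel_residual (rel_of_bmx p) (rel_of_bmx b).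
Proof.
apply/setP => -[i y]; rewrite !inE /= /bmx_residual all_iota_ord.
by apply: eq_forallb => z; rewrite !inE.
Qed.

Lemma bmx_eqE a b : bmx_eq a b = (rel_of_bmx a == rel_of_bmx b).
Proof.
rewrite /bmx_eq all_iota_ord; apply/forallP/eqP => [ab|ab i].
  apply/setP => -[i j]; rewrite !inE.
  by move/allP: (ab i) => /(_ j (mem_ord_iota j))/eqP.
rewrite all_iota_ord; apply/forallP => j.
by have /setP/(_ (i, j)) := ab; rewrite !inE => ->.
Qed.

Lemma bmx_invertibleE m : bmx_invertible m = rel_invertible (rel_of_bmx m).
Proof.
by rewrite /bmx_invertible !bmx_eqE !rel_of_bmx_comp rel_of_bmx_conv rel_of_bmx_diag.
Qed.

Lemma bmx_rows_meetE m :
  bmx_eq (bmx_comp m (bmx_conv m)) bmx_top = rel_rows_meet (rel_of_bmx m).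
Proof. by rewrite bmx_eqE rel_of_bmx_comp rel_of_bmx_conv rel_of_bmx_top. Qed.

(* The criterion of [prime_rel_residual], for all 2^16 relations [b]; the
   residual is tabulated so that it is evaluated only once per [b]. *)
Definition bmx_prime_test (p : bmx) : bool :=
  all (fun i => has (p i) I4) I4 &&
  all (fun l => let b := bmx_of_seq l in
                let a := bmx_of_seq (bmx_table (bmx_residual p b)) in
                if bmx_eq (bmx_comp a b) p then bmx_invertible b || bmx_invertible a else true)
      (all_seqs (all_seqs [:: true; false] 4) 4).

Lemma bmx_prime_test_sound p : bmx_prime_test p -> prime_rel (rel_of_bmx p).
Proof.
case/andP=> /allP p_total /allP p_res; apply: prime_rel_residual => [x|b].
  have /hasP[y] := p_total x (mem_ord_iota x); rewrite mem_iota => y4 xy.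
  by exists (inord y); rewrite inE /= inordK.
have b_in : bmx_table (bmx_of_rel b) \in all_seqs (all_seqs [:: true; false] 4) 4.
  apply: mem_all_seqs; first by rewrite size_map size_iota.
  apply/allP => _ /mapP[i _ ->]; apply: mem_all_seqs; first by rewrite size_map size_iota.
  by apply/allP => -[].
rewrite -(rel_of_bmx_of_rel b) -(rel_of_bmx_table (bmx_of_rel b)).
move: (bmx_table (bmx_of_rel b)) b_in => l /p_res /=.
rewrite -rel_of_bmx_residual -(rel_of_bmx_table (bmx_residual _ _)) -rel_of_bmx_comp.
by rewrite -!bmx_invertibleE bmx_eqE; case: eqP.
Qed.

Local Open Scope ring_scope.

Section SquareZeroRep.

Variables (X : finType) (k : fieldType) (p q : rel_on X).
Hypothesis diag_prime : prime_rel (rel_diag X).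
Hypotheses (p_prime : prime_rel p) (q_prime : prime_rel q).
Hypotheses (p_ninv : ~~ rel_invertible p) (q_ninv : ~~ rel_invertible q).
Hypothesis pq_nassoc : ~~ rel_assoc p q.
Variables (m : nat) (A B : 'M[k]_m).
Hypotheses (AA : A *m A = 0) (AB : A *m B = 0) (BA : B *m A = 0) (BB : B *m B = 0).

Definition sqz_act (R : rel_on X) : 'M[k]_m :=
  if rel_invertible R then 1%:M
  else if rel_assoc p R then A else if rel_assoc q R then B else 0.

Lemma sqz_act_rep : is_BX_rep sqz_act.
Proof.
split=> [|R S]; first by rewrite /sqz_act rel_invertible_diag.
rewrite /sqz_act; have [R_inv|R_ninv] := boolP (rel_invertible R).
  by rewrite rel_invertible_compl // !rel_assoc_compl // mulmx1.
have [S_inv|S_ninv] := boolP (rel_invertible S).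
  by rewrite rel_invertible_compr // !rel_assoc_compr // (negbTE R_ninv) /= mul1mx.
have not_assoc P : prime_rel P -> rel_assoc P (rel_comp R S) = false.
  move=> P_prime; apply/negbTE/negP => /(prime_rel_assoc P_prime)/(_ R S erefl).
  by rewrite (negbTE R_ninv) (negbTE S_ninv).
rewrite -(rel_assoc1 (rel_comp R S)) !not_assoc //.
by do 4?case: ifP => _; rewrite ?AA ?AB ?BA ?BB ?mulmx0 ?mul0mx.
Qed.

Lemma sqz_act_p : sqz_act p = A.
Proof. by rewrite /sqz_act (negbTE p_ninv) rel_assoc_refl. Qed.

Lemma sqz_act_q : sqz_act q = B.
Proof. by rewrite /sqz_act (negbTE q_ninv) (negbTE pq_nassoc) rel_assoc_refl. Qed.

End SquareZeroRep.

Section ShiftMatrix.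

Variable R : pzRingType.

Definition shift_mx m p d : 'M[R]_(m, p) := \matrix_(i, j) (j == i + d :> nat)%N%:R.

Lemma mul_shift_mxE m p q d (Q : 'M[R]_(p.+1, q)) (i : 'I_m) j :
  (i + d <= p)%N -> (shift_mx m p.+1 d *m Q) i j = Q (inord (i + d)) j.
Proof.
move=> idp; rewrite mxE (bigD1 (inord (i + d))) //= big1 ?addr0.
  by rewrite mxE inordK // eqxx mul1r.
move=> l l_neq; rewrite mxE; case: eqP => [li|_]; last by rewrite mul0r.
by rewrite -li inord_val eqxx in l_neq.
Qed.

Lemma mulmx_shiftE m p q d (P : 'M[R]_(q, m.+1)) i (j : 'I_p) :
  (P *m shift_mx m.+1 p d) i j =
    if (d <= j <= m + d)%N then P i (inord (j - d)) else 0.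
Proof.
rewrite mxE; case: ifP => [/andP[dj jmd]|jd].
  rewrite (bigD1 (inord (j - d))) //= big1 ?addr0.
    by rewrite mxE inordK; [rewrite subnK // eqxx mulr1 | lia].
  move=> l l_neq; rewrite mxE; case: eqP => [jl|_]; last by rewrite mulr0.
  by rewrite jl addnK inord_val eqxx in l_neq.
rewrite big1 // => l _; rewrite mxE; case: eqP => [jl|_]; last by rewrite mulr0.
by move: jd; rewrite jl leq_addl /= leq_add2r -ltnS ltn_ord.
Qed.

End ShiftMatrix.

Lemma shift_invariant_scalar (R : nmodType) (f : nat -> nat -> R) N :
  (forall x y, x < N -> y < N -> f x.+1 y.+1 = f x y)%N ->
  (forall x, (x < N)%N -> f x N = 0) ->
  (forall x, (x < N)%N -> f x.+1 0%N = 0) ->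
  forall x y, (x <= N)%N -> (y <= N)%N -> f x y = f 0%N 0%N *+ (x == y).
Proof.
move=> f_shift f_last f_first.
have f_shiftn t x y :
    (x + t <= N)%N -> (y + t <= N)%N -> f (x + t)%N (y + t)%N = f x y.
  elim: t => [|t IHt] xtN ytN; first by rewrite !addn0.
  by rewrite !addnS f_shift ?IHt //; lia.
move=> x y xN yN; case: ltngtP => [xy|yx|<-]; rewrite ?mulr0n.
- rewrite -(f_shiftn (N - y)%N) ?subnKC ?f_last //; lia.
- have := f_shiftn y (x - y)%N 0%N.
  rewrite add0n subnK ?(ltnW yx) // => /(_ xN yN) ->.
  by rewrite -(subnSK yx) f_first //; lia.
- by rewrite -[x]add0n f_shiftn.
Qed.

Section BlockUpper.

Variables (R : pzRingType) (m1 m2 : nat).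

Lemma mul_block_ur (F G : 'M[R]_(m1, m2)) :
  block_mx 0 F 0 0 *m block_mx 0 G 0 0 = 0 :> 'M_(m1 + m2).
Proof. by rewrite mulmx_block !mulmx0 !mul0mx !addr0 block_mx0. Qed.

Lemma comm_block_ur (P : 'M[R]_m1) F G Q (C : 'M_(m1, m2)) :
  block_mx P F G Q *m block_mx 0 C 0 0 = block_mx 0 C 0 0 *m block_mx P F G Q ->
  G *m C = 0 /\ P *m C = C *m Q.
Proof.
rewrite !mulmx_block !mulmx0 !mul0mx !addr0 !add0r.
by case/eq_block_mx => _ -> _ ->.
Qed.

End BlockUpper.

Lemma idempotent_block_scalar (R : idomainType) m1 m2 c (F : 'M[R]_(m1, m2.+1)) :
  let E := block_mx c%:M F 0 c%:M in E *m E = E -> E = 0 \/ E = 1%:M.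
Proof.
move=> E; rewrite /E mulmx_block !mulmx0 !mul0mx !addr0 !add0r -!scalar_mxM.
rewrite mul_scalar_mx mul_mx_scalar => /eq_block_mx[_ cF _ cc].
have {cc}: c * c = c by have /matrixP/(_ ord0 ord0) := cc; rewrite !mxE eqxx !mulr1n.
move/eqP; rewrite -subr_eq0 -{3}[c]mulr1 -mulrBr mulf_eq0 subr_eq0.
case/orP=> [/eqP c0|/eqP c1].
  by left; move: cF; rewrite c0 !scale0r addr0 => <-; rewrite !raddf0 block_mx0.
right; move/eqP: cF; rewrite c1 scale1r -{3}[F]addr0 (inj_eq (addrI F)) => /eqP ->.
by rewrite -scalar_mx_block.
Qed.

Section Kronecker.

Variables (k : fieldType) (n : nat).

Local Notation S := (shift_mx k n.+1 n.+2 0).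
Local Notation T := (shift_mx k n.+1 n.+2 1).

(* The Kronecker module with top basis e_0..e_n and bottom basis f_0..f_(n+1),
   on which X maps e_i to f_i and Y maps e_i to f_(i+1) (row vectors). *)
Definition kron_X : 'M[k]_(n.+1 + n.+2) := block_mx 0 S 0 0.
Definition kron_Y : 'M[k]_(n.+1 + n.+2) := block_mx 0 T 0 0.

Lemma kron_comm_scalar P F G (Q : 'M[k]_n.+2) :
  let E := block_mx P F G Q in
  E *m kron_X = kron_X *m E -> E *m kron_Y = kron_Y *m E ->
  [/\ G = 0, P = (Q ord0 ord0)%:M & Q = (Q ord0 ord0)%:M].
Proof.
move=> E /comm_block_ur[GS PS] /comm_block_ur[_ PT].
pose p x y := P (inord x) (inord y); pose q x y := Q (inord x) (inord y).
have PSE x y : (x <= n)%N -> (y <= n.+1)%N -> q x y = if (y <= n)%N then p x y else 0.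
  move=> xn yn; move/matrixP/(_ (inord x) (inord y)): PS.
  by rewrite mulmx_shiftE mul_shift_mxE ?inordK ?addn0 ?subn0 ?(leqW xn) // => <-.
have PTE x y : (x <= n)%N -> (y <= n.+1)%N ->
    q x.+1 y = if (0 < y <= n.+1)%N then p x y.-1 else 0.
  move=> xn yn; move/matrixP/(_ (inord x) (inord y)): PT.
  by rewrite mulmx_shiftE mul_shift_mxE ?inordK ?addn1 ?subn1 // => <-.
have qE : forall x y,
    (x <= n.+1)%N -> (y <= n.+1)%N -> q x y = q 0%N 0%N *+ (x == y).
  apply: (@shift_invariant_scalar _ q) => [x y xn yn|x xn|x xn].
  - by rewrite PTE // PSE ?(ltnW yn) //= ltnS yn.
  - by rewrite PSE // ltnn.
  - by rewrite PTE //=.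
have Q_scalar : Q = (Q ord0 ord0)%:M.
  apply/matrixP => i j; rewrite mxE.
  by have := qE i j (leq_ord i) (leq_ord j); rewrite /q !inord_val (inord_val ord0).
split=> //.
- apply/matrixP => i j; move/matrixP/(_ i (widen_ord (leqnSn _) j)): GS.
  by rewrite mulmx_shiftE /= addn0 subn0 leq_ord inord_val !mxE.
- apply/matrixP => i j; rewrite mxE.
  have := PSE i j (leq_ord i) (leqW (leq_ord j)).
  rewrite (qE i j (leqW (leq_ord i)) (leqW (leq_ord j))) /p /q leq_ord.
  by rewrite !inord_val (inord_val ord0) => <-.
Qed.

Lemma kron_idempotent (E : 'M[k]_(n.+1 + n.+2)) :
  E *m kron_X = kron_X *m E -> E *m kron_Y = kron_Y *m E -> E *m E = E ->
  E = 0 \/ E = 1%:M.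
Proof.
rewrite -(submxK E) => /kron_comm_scalar/[apply].
set c := _ ord0 ord0; case=> -> -> ->.
exact: idempotent_block_scalar.
Qed.

End Kronecker.

Lemma proj_mx_comm (F : fieldType) n (U W f : 'M[F]_n) :
  (U :&: W = 0)%MS -> (1%:M <= U + W)%MS -> stablemx U f -> stablemx W f ->
  proj_mx U W *m f = f *m proj_mx U W.
Proof.
move=> UW0 UW1 Uf Wf; apply/eqP; rewrite -subr_eq0.
set E := proj_mx U W; set D := _ - _.
have UD : U *m D = 0.
  by rewrite mulmxBr (mulmxA U E) (mulmxA U f) !proj_mx_id ?subrr.
have WD : W *m D = 0.
  by rewrite mulmxBr (mulmxA W E) (mulmxA W f) !proj_mx_0 ?mul0mx ?subrr.
have : (1%:M <= kermx D)%MS.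
  by apply: submx_trans UW1 _; rewrite addsmx_sub !sub_kermx UD WD eqxx.
by move/sub_kermxP; rewrite mul1mx => ->.
Qed.

Section Modules.

Variables (k : fieldType) (X : finType).

Lemma indecomposable_of_idempotent (M : BXmod k X) :
  (0 < mdim M)%N ->
  (forall E, E *m E = E -> (forall R, E *m mact M R = mact M R *m E) ->
             E = 0 \/ E = 1%:M) ->
  indecomposable M.
Proof.
move=> M_gt0 M_idem; split=> // -[U [W [U0 W0 UR WR]]].
case/andP=> /eqmx0P UW0 /andP[_ UW1].
have [E0|E1] := M_idem (proj_mx U W) (proj_mx_proj UW0)
                  (fun R => proj_mx_comm UW0 UW1 (UR R) (WR R)).
- by move/negP: U0; apply; rewrite -(proj_mx_id UW0 (submx_refl U)) E0 mulmx0.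
- by move/negP: W0; apply; rewrite -[W]mulmx1 -E1 proj_mx_0.
Qed.

Lemma infinite_rep_type_unbounded :
  (forall d, exists M : BXmod k X, indecomposable M /\ (d <= mdim M)%N) ->
  infinite_rep_type k X.
Proof.
move=> unbounded [N [F F_all]].
have [M [M_indec M_large]] := unbounded (\max_(i < N) mdim (F i)).+1%N.
have [i [P [Q [PQ _ _]]]] := F_all M M_indec.
have : (mdim M <= mdim (F i))%N by rewrite -(mxrank1 k (mdim M)) -PQ mulmx_max_rank.
by move/(leq_trans M_large); rewrite ltnNge (leq_bigmax i).
Qed.

End Modules.

Lemma infinite_rep_type_iso (k : fieldType) (X Y : finType)
    (G : rel_on X -> rel_on Y) (F : rel_on Y -> rel_on X) :
  cancel G F -> cancel F G ->
  {morph G : R S / rel_comp R S} -> G (rel_diag X) = rel_diag Y ->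
  infinite_rep_type k Y -> infinite_rep_type k X.
Proof.
move=> GK FK G_comp G_diag Y_inf [N [Fam Fam_all]]; apply: Y_inf.
have F_comp R S : F (rel_comp R S) = rel_comp (F R) (F S).
  by rewrite -{1}(FK R) -{1}(FK S) -G_comp GK.
have F_diag : F (rel_diag Y) = rel_diag X by rewrite -G_diag GK.
have pullF (M : BXmod k X) : is_BX_rep (fun R => mact M (F R)).
  by case: (mact_rep M) => act1 actM; split=> [|R S]; rewrite ?F_diag ?F_comp.
have pullG (M : BXmod k Y) : is_BX_rep (fun R => mact M (G R)).
  by case: (mact_rep M) => act1 actM; split=> [|R S]; rewrite ?G_diag ?G_comp.
exists N, (fun i => BXMod (pullF (Fam i))) => M [M_gt0 M_indec].
have [|i [P [Q [PQ QP PM]]]] := Fam_all (BXMod (pullG M)).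
  split=> // -[U [W [U0 W0 UR WR UW]]]; apply: M_indec.
  by exists U, W; split=> // R; rewrite -(FK R); [exact: UR | exact: WR].
by exists i, P, Q; split=> // R; have := PM (F R); rewrite /= FK.
Qed.

Definition p1 : rel_on 'I_4 := rel_of_bmx (bmx_of_seq
  [:: [:: false; false; true;  true ];
      [:: false; true;  false; true ];
      [:: false; true;  true;  false];
      [:: true;  false; false; false]]).

Definition p2 : rel_on 'I_4 := rel_of_bmx (bmx_of_seq
  [:: [:: false; true;  true;  true ];
      [:: true;  false; false; true ];
      [:: true;  false; true;  false];
      [:: true;  true;  false; false]]).

Lemma p1_prime : prime_rel p1.
Proof. by apply: bmx_prime_test_sound; vm_compute. Qed.

Lemma p2_prime : prime_rel p2.
Proof. by apply: bmx_prime_test_sound; vm_compute. Qed.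

Lemma rel_diag_prime : prime_rel (rel_diag 'I_4).
Proof. by rewrite -rel_of_bmx_diag; apply: bmx_prime_test_sound; vm_compute. Qed.

Lemma p1_not_invertible : ~~ rel_invertible p1.
Proof. by rewrite -bmx_invertibleE; vm_compute. Qed.

Lemma p2_not_invertible : ~~ rel_invertible p2.
Proof. by rewrite -bmx_invertibleE; vm_compute. Qed.

Lemma p1_p2_not_assoc : ~~ rel_assoc p1 p2.
Proof.
have p2_meet : rel_rows_meet p2 by rewrite -bmx_rows_meetE; vm_compute.
have p1_not_meet : ~~ rel_rows_meet p1 by rewrite -bmx_rows_meetE; vm_compute.
by apply: contra p1_not_meet => /rel_assoc_sym/rel_rows_meet_assoc; apply.
Qed.

Definition kron_mod (k : fieldType) n : BXmod k 'I_4 :=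
  BXMod (sqz_act_rep rel_diag_prime p1_prime p2_prime
           (mul_block_ur _ _) (mul_block_ur _ _) (mul_block_ur _ _) (mul_block_ur _ _)
         : is_BX_rep (sqz_act p1 p2 (kron_X k n) (kron_Y k n))).

Lemma kron_mod_indecomposable (k : fieldType) n : indecomposable (kron_mod k n).
Proof.
apply: indecomposable_of_idempotent => // E EE E_comm.
apply: kron_idempotent EE.
  by have := E_comm p1; rewrite /= sqz_act_p ?p1_not_invertible.
by have := E_comm p2; rewrite /= sqz_act_q ?p2_not_invertible ?p1_p2_not_assoc.
Qed.

Local Close Scope ring_scope.

Theorem theorem6 (X : finType) (hX : #|X| = 4) (k : fieldType) :
  infinite_rep_type k X.
Proof.
pose f (i : 'I_4) : X := enum_val (cast_ord (esym hX) i).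
pose g (x : X) : 'I_4 := cast_ord hX (enum_rank x).
have fK : cancel f g by move=> i; rewrite /f /g enum_valK cast_ordKV.
have gK : cancel g f by move=> x; rewrite /f /g cast_ordK enum_rankK.
apply: (infinite_rep_type_iso (rel_pullK gK) (rel_pullK fK) (rel_pull_comp gK)
          (rel_pull_diag (can_inj fK))).
apply: infinite_rep_type_unbounded => d; exists (kron_mod k d).
by split; [exact: kron_mod_indecomposable | rewrite /=; lia].
Qed.
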